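(* Consider a steady travelling-wave solution of the one-dimensional solid-propellant combustion model described in the context, with $c<0$, and assume the solid and gas specific heats are equal, $c_s=c_p$. Then the burnt-gas temperature $T_f:=\lim_{x\to+\infty}T(x)$ satisfies $$T_f=T_0+\frac{Q_g+Q_p}{c_p}.$$
   Context: Travelling-wave frame: solid in $x<0$, gas in $x>0$, interface at $x=0$; $c<0$ is the constant regression velocity, $\rho_s>0$ the solid density, $\dot m:=-\rho_s c>0$. Constants: solid specific heat $c_s>0$ and conductivity $\lambda_s>0$, $D_s:=\lambda_s/(\rho_s c_s)$; gas specific heat $c_p>0$ and conductivity $\lambda_g>0$; common molar mass $M>0$ of the two gas species; stoichiometric coefficient $\nu<0$ of the reactant; molar heat of the gas reaction $Q_{mol}>0$, and $Q_g:=-Q_{mol}/(\nu M)>0$; pyrolysis heat $Q_p\in\mathbb R$ (per unit mass of propellant); initial temperature $T_0>0$. Unknowns: $T:\mathbb R\to(0,\infty)$ continuous, $C^2$ on $(-\infty,0]$ and on $[0,\infty)$ (one-sided derivatives at $0$); on $x>0$: $\rho>0,u$ of class $C^1$, reactant mass fraction $Y$ of class $C^2$, species diffusivity $D_g>0$ continuous, reaction rate $\omega(x)=\omega(T(x),Y(x))\ge0$ continuous. Equations: $-cT'-D_sT''=0$ for $x<0$; for $x>0$: $-c\rho'+(\rho u)'=0$, $\rho(u-c)Y'-(\rho D_gY')'=\nu M\omega$, $\rho(u-c)T'-(\lambda_g T'/c_p)'=\omega Q_{mol}/c_p$. Boundary/interface conditions: $T(x)\to T_0$ and $T'(x)\to0$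 as $x\to-\infty$; $T(0^-)=T(0^+)=T_s$; $\lambda_sT'(0^-)=\dot m Q_p+\lambda_gT'(0^+)$; $\rho(0^+)(u(0^+)-c)=-\rho_s c$; injection mass fraction $Y(0^-)=1$; $\dot m Y(0^-)=\dot m Y(0^+)-\rho(0^+)D_g(0^+)Y'(0^+)$; as $x\to+\infty$: $T(x)\to T_f$ (finite), $T'(x)\to0$, $Y(x)\to0$, $\rho D_gY'(x)\to0$. *)

From Stdlib Require Import Reals.
From Coquelicot Require Import Coquelicot.
Open Scope R_scope.

Definition lim_right (f : R -> R) (a l : R) : Prop :=
  filterlim f (at_right a) (locally l).
Definition lim_left (f : R -> R) (a l : R) : Prop :=
  filterlim f (at_left a) (locally l).
Definition lim_pinf (f : R -> R) (l : R) : Prop :=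
  filterlim f (Rbar_locally p_infty) (locally l).
Definition lim_minf (f : R -> R) (l : R) : Prop :=
  filterlim f (Rbar_locally m_infty) (locally l).

Definition C1_pos (f : R -> R) : Prop :=
  forall x, 0 < x -> ex_derive f x /\ continuous (Derive f) x.

Definition C2_pos (f : R -> R) : Prop :=
  forall x, 0 < x -> ex_derive f x /\ ex_derive (Derive f) x /\
                     continuous (Derive (Derive f)) x.

Definition C2_neg (f : R -> R) : Prop :=
  forall x, x < 0 -> ex_derive f x /\ ex_derive (Derive f) x /\
                     continuous (Derive (Derive f)) x.

From Stdlib Require Import Reals Lra.
From Coquelicot Require Import Coquelicot.
Open Scope R_scope.

(* Each conservation law integrates once to a constant flux.  In the solid,
   -c T - D_s T' is constant, so comparing x -> -oo with x -> 0^- gives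
   D_s T'(0^-) = c (T0 - T_s).  In the gas, rho (u - c) is the constant mass
   flux mdot, and since Q_g nu M = -Q_mol, adding Q_g/c_p times the species
   equation to the energy equation removes the reaction rate: the total
   enthalpy flux mdot T - (lambda_g/c_p) T' + (Q_g/c_p) (mdot Y - rho D_g Y')
   is constant on x > 0.  Comparing x -> 0^+ with x -> +oo, the injection and
   interface conditions and c_s = c_p then determine T_f. *)

Section LimitAlgebra.
Context {T : Type} {F : (T -> Prop) -> Prop} {FF : Filter F}.

Lemma filterlim_Rplus (f g : T -> R) a b :
  filterlim f F (locally a) -> filterlim g F (locally b) ->
  filterlim (fun x => f x + g x) F (locally (a + b)).
Proof. intros Hf Hg. exact (filterlim_comp_2 f g Rplus Hf Hg (filterlim_plus a b)). Qed.

Lemma filterlim_Rminus (f g : T -> R) a b :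
  filterlim f F (locally a) -> filterlim g F (locally b) ->
  filterlim (fun x => f x - g x) F (locally (a - b)).
Proof.
  intros Hf Hg. apply filterlim_Rplus; [exact Hf|].
  exact (filterlim_comp _ _ _ g Ropp _ _ _ Hg (filterlim_opp b)).
Qed.

Lemma filterlim_Rmult (f g : T -> R) a b :
  filterlim f F (locally a) -> filterlim g F (locally b) ->
  filterlim (fun x => f x * g x) F (locally (a * b)).
Proof. intros Hf Hg. exact (filterlim_comp_2 f g Rmult Hf Hg (filterlim_mult a b)). Qed.

End LimitAlgebra.

Ltac filterlim_arith :=
  repeat first
    [ assumption | apply filterlim_const | apply filterlim_Rminus
    | apply filterlim_Rplus | apply filterlim_Rmult ].

Lemma continuous_lim_left (f : R -> R) x :
  continuous f x -> lim_left f x (f x).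
Proof.
  intros Hf. eapply filterlim_filter_le_1; [|exact Hf].
  intros P HP. unfold at_left, within. apply (filter_imp P); [now intros|exact HP].
Qed.

Lemma continuous_lim_right (f : R -> R) x :
  continuous f x -> lim_right f x (f x).
Proof.
  intros Hf. eapply filterlim_filter_le_1; [|exact Hf].
  intros P HP. unfold at_right, within. apply (filter_imp P); [now intros|exact HP].
Qed.

Section FirstIntegral.
Variables (f : R -> R) (P : R -> Prop).
Hypothesis P_interval : forall x y z, P x -> P y -> x <= z <= y -> P z.
Hypothesis f'_0 : forall x, P x -> is_derive f x 0.

Lemma is_derive_0_const_on x y : P x -> P y -> f x = f y.
Proof.
  assert (Hle : forall a b, P a -> P b -> a < b -> f a = f b).
  { intros a b Ha Hb Hab. apply eq_is_derive; [|exact Hab].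
    intros t Ht. apply f'_0, (P_interval a b); auto. }
  intros Hx Hy. destruct (Rtotal_order x y) as [Hxy|[->|Hxy]]; auto.
  symmetry; auto.
Qed.

Lemma is_derive_0_filterlim_eq (F : (R -> Prop) -> Prop) {FF : ProperFilter F} l x :
  F P -> filterlim f F (locally l) -> P x -> l = f x.
Proof.
  intros HP Hl Hx.
  apply (filterlim_locally_unique (FF := Proper_StrongProper F FF) f); [exact Hl|].
  apply (filterlim_ext_loc (fun _ => f x)); [|apply filterlim_const].
  apply (filter_imp P); [|exact HP].
  intros y Hy. now apply is_derive_0_const_on.
Qed.

End FirstIntegral.

Lemma at_left_lt x : at_left x (fun y => y < x).
Proof. unfold at_left, within. now apply filter_forall. Qed.

Lemma at_right_gt x : at_right x (fun y => x < y).
Proof. unfold at_right, within. now apply filter_forall. Qed.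

Lemma interval_lt0 x y z : x < 0 -> y < 0 -> x <= z <= y -> z < 0.
Proof. lra. Qed.

Lemma interval_gt0 x y z : 0 < x -> 0 < y -> x <= z <= y -> 0 < z.
Proof. lra. Qed.

Lemma solid_heat_flux_balance (c D_s T0 dT_l : R) (T : R -> R) :
  C2_neg T -> continuous T 0 ->
  (forall x, x < 0 -> - c * Derive T x - D_s * Derive (Derive T) x = 0) ->
  lim_minf T T0 -> lim_minf (Derive T) 0 -> lim_left (Derive T) 0 dT_l ->
  D_s * dT_l = c * (T0 - T 0).
Proof.
  intros HT Hcont Heq HT0 HdT0 HdTl.
  set (flux := fun x => - c * T x - D_s * Derive T x).
  assert (Hflux' : forall x, x < 0 -> is_derive flux x 0).
  { intros x Hx. destruct (HT x Hx) as [HT1 [HT2 _]].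
    rewrite <- (Heq x Hx). unfold flux.
    auto_derive; [tauto|rewrite !Rmult_1_l; reflexivity]. }
  assert (Hminf : - c * T0 - D_s * 0 = flux (-1)).
  { apply (is_derive_0_filterlim_eq flux _ interval_lt0 Hflux' (Rbar_locally m_infty)).
    - now exists 0.
    - unfold flux. filterlim_arith.
    - lra. }
  assert (Hleft : - c * T 0 - D_s * dT_l = flux (-1)).
  { apply (is_derive_0_filterlim_eq flux _ interval_lt0 Hflux' (at_left 0)).
    - apply at_left_lt.
    - unfold flux. filterlim_arith. now apply continuous_lim_left.
    - lra. }
  lra.
Qed.

Lemma mass_flux_const (c : R) (rho u : R -> R) :
  C1_pos rho ->
  (forall x, 0 < x -> ex_derive (fun y => rho y * u y) x /\
                      - c * Derive rho x + Derive (fun y => rho y * u y) x = 0) ->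
  lim_right rho 0 (rho 0) -> lim_right u 0 (u 0) ->
  forall x, 0 < x -> rho x * (u x - c) = rho 0 * (u 0 - c).
Proof.
  intros Hrho Heq Hrho0 Hu0 x Hx.
  set (flux := fun y => rho y * u y - c * rho y).
  assert (Hflux' : forall x, 0 < x -> is_derive flux x 0).
  { intros t Ht. destruct (Heq t Ht) as [Hru Ht0]. destruct (Hrho t Ht) as [Hr _].
    replace 0 with (Derive (fun y => rho y * u y) t - c * Derive rho t) by lra.
    apply (is_derive_minus (fun y => rho y * u y) (fun y => c * rho y));
      [now apply Derive_correct|].
    now apply is_derive_scal, Derive_correct. }
  assert (H0 : rho 0 * u 0 - c * rho 0 = flux x).
  { apply (is_derive_0_filterlim_eq flux _ interval_gt0 Hflux' (at_right 0)); auto.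
    - apply at_right_gt.
    - unfold flux. filterlim_arith. }
  unfold flux in H0. lra.
Qed.

Lemma gas_enthalpy_flux_balance (m b k T_s dT_r Y_s F_s T_f : R) (T Y F : R -> R) :
  C2_pos T -> (forall x, 0 < x -> ex_derive Y x /\ ex_derive F x) ->
  (forall x, 0 < x ->
     m * Derive T x - b * Derive (Derive T) x + k * (m * Derive Y x - Derive F x) = 0) ->
  lim_right T 0 T_s -> lim_right (Derive T) 0 dT_r ->
  lim_right Y 0 Y_s -> lim_right F 0 F_s ->
  lim_pinf T T_f -> lim_pinf (Derive T) 0 -> lim_pinf Y 0 -> lim_pinf F 0 ->
  m * T_f = m * T_s - b * dT_r + k * (m * Y_s - F_s).
Proof.
  intros HT HYF Heq HTs HdTs HYs HFs HTf HdTf HYf HFf.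
  set (flux := fun x => m * T x - b * Derive T x + k * (m * Y x - F x)).
  assert (Hflux' : forall x, 0 < x -> is_derive flux x 0).
  { intros x Hx. destruct (HT x Hx) as [HT1 [HT2 _]]. destruct (HYF x Hx) as [HY HF].
    rewrite <- (Heq x Hx). unfold flux.
    auto_derive; [tauto|rewrite !Rmult_1_l; reflexivity]. }
  assert (Hs : m * T_s - b * dT_r + k * (m * Y_s - F_s) = flux 1).
  { apply (is_derive_0_filterlim_eq flux _ interval_gt0 Hflux' (at_right 0)).
    - apply at_right_gt.
    - unfold flux. filterlim_arith.
    - lra. }
  assert (Hf : m * T_f - b * 0 + k * (m * 0 - 0) = flux 1).
  { apply (is_derive_0_filterlim_eq flux _ interval_gt0 Hflux' (Rbar_locally p_infty)).
    - now exists 0.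
    - unfold flux. filterlim_arith.
    - lra. }
  lra.
Qed.

Lemma reaction_terms_cancel (m lambda_g c_p nu M Q_mol w : R) (T Y F : R -> R) x :
  c_p <> 0 -> nu <> 0 -> M <> 0 ->
  m * Derive T x - Derive (fun y => lambda_g * Derive T y / c_p) x = w * Q_mol / c_p ->
  m * Derive Y x - Derive F x = nu * M * w ->
  m * Derive T x - lambda_g / c_p * Derive (Derive T) x
    + (- Q_mol / (nu * M)) / c_p * (m * Derive Y x - Derive F x) = 0.
Proof.
  intros Hcp Hnu HM HT ->.
  assert (HD : Derive (fun y => lambda_g * Derive T y / c_p) x
               = lambda_g / c_p * Derive (Derive T) x).
  { rewrite <- Derive_scal. apply Derive_ext. intros; unfold Rdiv; ring. }
  rewrite HD in HT. rewrite HT. field. auto.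
Qed.

Lemma burnt_gas_temperature_of_balances
  (c rho_s c_p lambda_s lambda_g D_s Q_g Q_p T0 T_s T_f dT_l dT_r : R) :
  c < 0 -> 0 < rho_s -> 0 < c_p ->
  D_s = lambda_s / (rho_s * c_p) ->
  D_s * dT_l = c * (T0 - T_s) ->
  lambda_s * dT_l = - rho_s * c * Q_p + lambda_g * dT_r ->
  - rho_s * c * T_f
    = - rho_s * c * T_s - lambda_g / c_p * dT_r + Q_g / c_p * (- rho_s * c) ->
  T_f = T0 + (Q_g + Q_p) / c_p.
Proof.
  intros Hc Hrho Hcp HDs Hsolid Hiface Hgas.
  assert (Hsolid' : lambda_s * dT_l = rho_s * c_p * (c * (T0 - T_s))).
  { rewrite <- Hsolid, HDs. field; repeat split; lra. }
  assert (Hm : 0 < - rho_s * c * c_p) by (apply Rmult_lt_0_compat; nra).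
  apply (Rmult_eq_reg_l (- rho_s * c * c_p)); [|lra].
  transitivity (c_p * (- rho_s * c * T_f)); [ring|].
  rewrite Hgas.
  transitivity (- rho_s * c * c_p * T_s - lambda_g * dT_r - rho_s * c * Q_g);
    [field; repeat split; lra|].
  replace (lambda_g * dT_r) with (lambda_s * dT_l + rho_s * c * Q_p) by lra.
  rewrite Hsolid'. field; repeat split; lra.
Qed.

Theorem proposition3
  (c rho_s c_s lambda_s c_p lambda_g M nu Q_mol Q_p T0 : R)
  (T rho u Y D_g : R -> R) (omega : R -> R -> R)
  (dT_l dT_r dY_0 T_f : R) :
  c < 0 -> 0 < rho_s -> 0 < c_s -> 0 < lambda_s -> 0 < c_p -> 0 < lambda_g ->
  0 < M -> nu < 0 -> 0 < Q_mol -> 0 < T0 ->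
  (* equal specific heats *)
  c_s = c_p ->
  let D_s := lambda_s / (rho_s * c_s) in
  let mdot := - rho_s * c in
  let Q_g := - Q_mol / (nu * M) in
  (* regularity of T: continuous, positive, C^2 on (-oo,0] and on [0,+oo) *)
  (forall x, 0 < T x) ->
  (forall x, continuous T x) ->
  C2_neg T -> C2_pos T ->
  lim_left (Derive T) 0 dT_l -> (exists d2, lim_left (Derive (Derive T)) 0 d2) ->
  lim_right (Derive T) 0 dT_r -> (exists d2, lim_right (Derive (Derive T)) 0 d2) ->
  (* regularity of the gas unknowns on x > 0 (values at 0 are the limits 0^+) *)
  (forall x, 0 < x -> 0 < rho x) ->
  C1_pos rho -> C1_pos u -> C2_pos Y ->
  (forall x, 0 < x -> 0 < D_g x /\ continuous D_g x) ->
  (forall x, 0 < x -> 0 <= omega (T x) (Y x) /\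
                     continuous (fun y => omega (T y) (Y y)) x) ->
  lim_right rho 0 (rho 0) -> lim_right u 0 (u 0) -> lim_right Y 0 (Y 0) ->
  lim_right D_g 0 (D_g 0) -> lim_right (Derive Y) 0 dY_0 ->
  (* equations *)
  (forall x, x < 0 -> - c * Derive T x - D_s * Derive (Derive T) x = 0) ->
  (forall x, 0 < x ->
     ex_derive (fun y => rho y * u y) x /\
     - c * Derive rho x + Derive (fun y => rho y * u y) x = 0) ->
  (forall x, 0 < x ->
     ex_derive (fun y => rho y * D_g y * Derive Y y) x /\
     rho x * (u x - c) * Derive Y x
       - Derive (fun y => rho y * D_g y * Derive Y y) x
       = nu * M * omega (T x) (Y x)) ->
  (forall x, 0 < x ->
     rho x * (u x - c) * Derive T x
       - Derive (fun y => lambda_g * Derive T y / c_p) x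
       = omega (T x) (Y x) * Q_mol / c_p) ->
  (* boundary and interface conditions *)
  lim_minf T T0 -> lim_minf (Derive T) 0 ->
  lambda_s * dT_l = mdot * Q_p + lambda_g * dT_r ->
  rho 0 * (u 0 - c) = - rho_s * c ->
  mdot * 1 = mdot * Y 0 - rho 0 * D_g 0 * dY_0 ->
  lim_pinf T T_f -> lim_pinf (Derive T) 0 -> lim_pinf Y 0 ->
  lim_pinf (fun x => rho x * D_g x * Derive Y x) 0 ->
  T_f = T0 + (Q_g + Q_p) / c_p.
Proof.
  intros hc hrs _ _ hcp _ hM hnu _ _ hcscp D_s mdot Q_g _ hTc hC2n hC2p
    hdTl _ hdTr _ _ hC1r _ hC2Y _ _ hr0 hu0 hY0 hD0 hdY0
    hsol hmass hspec hen hTm hdTm hflux hmass0 hinj hTf hdTf hYf hFf.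
  assert (mass : forall x, 0 < x -> rho x * (u x - c) = mdot).
  { intros x hx. unfold mdot. rewrite <- hmass0.
    exact (mass_flux_const c rho u hC1r hmass hr0 hu0 x hx). }
  assert (gas : mdot * T_f = mdot * T 0 - lambda_g / c_p * dT_r
                + Q_g / c_p * (mdot * Y 0 - rho 0 * D_g 0 * dY_0)).
  { apply (gas_enthalpy_flux_balance _ _ _ _ _ _ _ _ T Y
             (fun y => rho y * D_g y * Derive Y y)); auto.
    - intros x hx. split; [apply hC2Y|apply hspec]; exact hx.
    - intros x hx. destruct (hspec x hx) as [_ hY]. pose proof (hen x hx) as hT.
      rewrite (mass x hx) in hY, hT.
      apply (reaction_terms_cancel _ _ _ _ _ _ (omega (T x) (Y x)));
        first [assumption | lra].
    - now apply continuous_lim_right.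
    - filterlim_arith. }
  rewrite <- hinj, Rmult_1_r in gas.
  apply (burnt_gas_temperature_of_balances c rho_s c_p lambda_s lambda_g D_s
           Q_g Q_p T0 (T 0) T_f dT_l dT_r); auto.
  - unfold D_s. now rewrite hcscp.
  - exact (solid_heat_flux_balance c D_s T0 dT_l T hC2n (hTc 0) hsol hTm hdTm hdTl).
Qed.
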